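(* Consider the semi-discrete scheme $\frac{d}{dt}\mathbf U_{i,j}=-\frac{\mathcal F^{EC}_{i+\frac12,j}-\mathcal F^{EC}_{i-\frac12,j}}{\Delta x}-\frac{\mathcal G^{EC}_{i,j+\frac12}-\mathcal G^{EC}_{i,j-\frac12}}{\Delta y}+\mathbf S_{i,j}$ with the fluxes and source term given in the context, and suppose the bottom values $\mathbf B_{i,j}$ are independent of time. If $\mathbf q^x_{i,j}=\mathbf q^y_{i,j}=0$ and $\mathbf h_{i,j}+\mathbf B_{i,j}=\mathbf C$ for all $i,j$ (with $\mathbf C\in\mathbb R^K$ a fixed vector), then $\frac{d}{dt}\mathbf h_{i,j}=\frac{d}{dt}\mathbf q^x_{i,j}=\frac{d}{dt}\mathbf q^y_{i,j}=0$ for all $i,j$; i.e., the scheme is well-balanced.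
   Context: Let $\mathcal M_k\in\mathbb R^{K\times K}$, $(\mathcal M_k)_{l,m}=\int\phi_k\phi_l\phi_m\rho$, where $\phi_1\equiv1,\dots,\phi_K$ are polynomials orthonormal with respect to a probability density $\rho$; $\mathcal P(\widehat z)=\sum_k\widehat z_k\mathcal M_k$; $g>0$. Uniform rectangular grid with cell sizes $\Delta x,\Delta y$; cell values $\mathbf U_{i,j}=(\mathbf h_{i,j},\mathbf q^x_{i,j},\mathbf q^y_{i,j})\in\mathbb R^{3K}$, bottom values $\mathbf B_{i,j}\in\mathbb R^K$, with $\mathcal P(\mathbf h_{i,j})$ positive definite; $\mathbf u_{i,j}=\mathcal P^{-1}(\mathbf h_{i,j})\mathbf q^x_{i,j}$, $\mathbf v_{i,j}=\mathcal P^{-1}(\mathbf h_{i,j})\mathbf q^y_{i,j}$. Averages/jumps: $\overline{\mathbf a}_{i+\frac12,j}=\tfrac12(\mathbf a_{i,j}+\mathbf a_{i+1,j})$, $[\![\mathbf a]\!]_{i+\frac12,j}=\mathbf a_{i+1,j}-\mathbf a_{i,j}$, analogously in $j$; $\overline{\mathcal P(\mathbf h)\mathbf h}$ is the average of $\mathcal P(\mathbf h_{i,j})\mathbf h_{i,j}$. $\mathcal F^{EC}_{i+\frac12,j}=\big(\mathcal P(\overline{\mathbf h})\overline{\mathbf u};\ \tfrac12 g\,\overline{\mathcal P(\mathbf h)\mathbf h}+\mathcal P(\overline{\mathbf u})\mathcal P(\overline{\mathbf h})\overline{\mathbf u};\ \mathcal P(\overline{\mathbf v})\mathcal P(\overline{\mathbf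 h})\overline{\mathbf u}\big)_{i+\frac12,j}$, $\mathcal G^{EC}_{i,j+\frac12}=\big(\mathcal P(\overline{\mathbf h})\overline{\mathbf v};\ \mathcal P(\overline{\mathbf u})\mathcal P(\overline{\mathbf h})\overline{\mathbf v};\ \tfrac12 g\,\overline{\mathcal P(\mathbf h)\mathbf h}+\mathcal P(\overline{\mathbf v})\mathcal P(\overline{\mathbf h})\overline{\mathbf v}\big)_{i,j+\frac12}$, $\mathbf S_{i,j}=\Big(0;\ -\tfrac{g}{2\Delta x}\big(\mathcal P(\overline{\mathbf h}_{i+\frac12,j})[\![\mathbf B]\!]_{i+\frac12,j}+\mathcal P(\overline{\mathbf h}_{i-\frac12,j})[\![\mathbf B]\!]_{i-\frac12,j}\big);\ -\tfrac{g}{2\Delta y}\big(\mathcal P(\overline{\mathbf h}_{i,j+\frac12})[\![\mathbf B]\!]_{i,j+\frac12}+\mathcal P(\overline{\mathbf h}_{i,j-\frac12})[\![\mathbf B]\!]_{i,j-\frac12}\big)\Big)$ ($K$-blocks separated by semicolons). *)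

From HB Require Import structures.
From mathcomp Require Import all_boot all_order all_algebra.
From mathcomp Require Import all_classical all_reals all_analysis.
Set Implicit Arguments. Unset Strict Implicit. Unset Printing Implicit Defensive.
Import Order.TTheory GRing.Theory Num.Theory.
Local Open Scope ring_scope.

Section SGSWE.
Variables (R : realType) (K : nat).
(* The stochastic Galerkin basis has K.+1 >= 1 elements, indexed by 'I_K.+1;
   phi ord0 plays the role of phi_1 == 1. *)
Variable (rho : R -> R) (phi : 'I_K.+1 -> {poly R}).

Definition Mk (k : 'I_K.+1) : 'M[R]_K.+1 :=
  \matrix_(l, m) Rintegral (@lebesgue_measure R) setT
     (fun x => (phi k).[x] * (phi l).[x] * (phi m).[x] * rho x).

Definition Pmat (z : 'cV[R]_K.+1) : 'M[R]_K.+1 := \sum_k z k ord0 *: Mk k.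

Definition posdef (A : 'M[R]_K.+1) : Prop :=
  forall x : 'cV[R]_K.+1, x != 0 -> 0 < ((x^T *m A *m x) ord0 ord0).

Definition avg (a b : 'cV[R]_K.+1) : 'cV[R]_K.+1 := 2^-1 *: (a + b).

Definition vel (h q : 'cV[R]_K.+1) : 'cV[R]_K.+1 := invmx (Pmat h) *m q.

Variable g : R.

Definition FEC_h (hL qxL qyL hR qxR qyR : 'cV[R]_K.+1) : 'cV[R]_K.+1 :=
  Pmat (avg hL hR) *m avg (vel hL qxL) (vel hR qxR).
Definition FEC_qx (hL qxL qyL hR qxR qyR : 'cV[R]_K.+1) : 'cV[R]_K.+1 :=
  (2^-1 * g) *: avg (Pmat hL *m hL) (Pmat hR *m hR)
  + Pmat (avg (vel hL qxL) (vel hR qxR)) *m Pmat (avg hL hR)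
      *m avg (vel hL qxL) (vel hR qxR).
Definition FEC_qy (hL qxL qyL hR qxR qyR : 'cV[R]_K.+1) : 'cV[R]_K.+1 :=
  Pmat (avg (vel hL qyL) (vel hR qyR)) *m Pmat (avg hL hR)
      *m avg (vel hL qxL) (vel hR qxR).

Definition GEC_h (hL qxL qyL hR qxR qyR : 'cV[R]_K.+1) : 'cV[R]_K.+1 :=
  Pmat (avg hL hR) *m avg (vel hL qyL) (vel hR qyR).
Definition GEC_qx (hL qxL qyL hR qxR qyR : 'cV[R]_K.+1) : 'cV[R]_K.+1 :=
  Pmat (avg (vel hL qxL) (vel hR qxR)) *m Pmat (avg hL hR)
      *m avg (vel hL qyL) (vel hR qyR).
Definition GEC_qy (hL qxL qyL hR qxR qyR : 'cV[R]_K.+1) : 'cV[R]_K.+1 :=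
  (2^-1 * g) *: avg (Pmat hL *m hL) (Pmat hR *m hR)
  + Pmat (avg (vel hL qyL) (vel hR qyR)) *m Pmat (avg hL hR)
      *m avg (vel hL qyL) (vel hR qyR).

Variables (dx dy : R).
Variables (h qx qy B : int -> int -> 'cV[R]_K.+1).

(* x-interface i+1/2 at row j : between cells (i,j) and (i+1,j) *)
Definition Fx (f : 'cV[R]_K.+1 -> 'cV[R]_K.+1 -> 'cV[R]_K.+1 ->
                   'cV[R]_K.+1 -> 'cV[R]_K.+1 -> 'cV[R]_K.+1 -> 'cV[R]_K.+1)
  (i j : int) : 'cV[R]_K.+1 :=
  f (h i j) (qx i j) (qy i j) (h (i + 1) j) (qx (i + 1) j) (qy (i + 1) j).
(* y-interface j+1/2 at column i : between cells (i,j) and (i,j+1) *)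
Definition Gy (f : 'cV[R]_K.+1 -> 'cV[R]_K.+1 -> 'cV[R]_K.+1 ->
                   'cV[R]_K.+1 -> 'cV[R]_K.+1 -> 'cV[R]_K.+1 -> 'cV[R]_K.+1)
  (i j : int) : 'cV[R]_K.+1 :=
  f (h i j) (qx i j) (qy i j) (h i (j + 1)) (qx i (j + 1)) (qy i (j + 1)).

(* source term S_{i,j} (second and third blocks; first block is 0) *)
Definition S_qx (i j : int) : 'cV[R]_K.+1 :=
  - (g / (2 * dx)) *:
     (Pmat (avg (h i j) (h (i + 1) j)) *m (B (i + 1) j - B i j)
      + Pmat (avg (h (i - 1) j) (h i j)) *m (B i j - B (i - 1) j)).
Definition S_qy (i j : int) : 'cV[R]_K.+1 :=
  - (g / (2 * dy)) *:
     (Pmat (avg (h i j) (h i (j + 1))) *m (B i (j + 1) - B i j)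
      + Pmat (avg (h i (j - 1)) (h i j)) *m (B i j - B i (j - 1))).

Definition rhs_h (i j : int) : 'cV[R]_K.+1 :=
  - (dx^-1 *: (Fx FEC_h i j - Fx FEC_h (i - 1) j))
  - (dy^-1 *: (Gy GEC_h i j - Gy GEC_h i (j - 1))).
Definition rhs_qx (i j : int) : 'cV[R]_K.+1 :=
  - (dx^-1 *: (Fx FEC_qx i j - Fx FEC_qx (i - 1) j))
  - (dy^-1 *: (Gy GEC_qx i j - Gy GEC_qx i (j - 1))) + S_qx i j.
Definition rhs_qy (i j : int) : 'cV[R]_K.+1 :=
  - (dx^-1 *: (Fx FEC_qy i j - Fx FEC_qy (i - 1) j))
  - (dy^-1 *: (Gy GEC_qy i j - Gy GEC_qy i (j - 1))) + S_qy i j.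

End SGSWE.

(* At rest all velocities vanish, so every advective part of the fluxes and the whole
   h-flux are zero, and only the pressure part (g/2) avg(P(h) h) of the momentum flux
   remains.  Because (M_k)_{l,m} is symmetric in k and m, P(a) b = P(b) a, which gives
   the discrete chain rule P(avg a b) (b - a) = (P(b) b - P(a) a) / 2.  Since the jump of
   B is minus the jump of h, the source term is exactly the pressure-flux difference. *)
From HB Require Import structures.
From mathcomp Require Import all_boot all_order all_algebra.
From mathcomp Require Import all_classical all_reals all_analysis.
From mathcomp Require Import ring.
Import Order.TTheory GRing.Theory Num.Theory.
Local Open Scope ring_scope.

Section GalerkinProduct.
Set Implicit Arguments. Unset Strict Implicit.
Variables (R : realType) (K : nat) (rho : R -> R) (phi : 'I_K.+1 -> {poly R}).

Local Notation P := (Pmat rho phi).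

Lemma Mk_sym (k l m : 'I_K.+1) : Mk rho phi k l m = Mk rho phi m l k.
Proof. by rewrite !mxE; congr Rintegral; apply/funext => x; ring. Qed.

Lemma Pmat_mulmxC (a b : 'cV[R]_K.+1) : P a *m b = P b *m a.
Proof.
apply/matrixP => l c; rewrite (ord1 c) !mxE.
under eq_bigr => m _ do rewrite /Pmat summxE big_distrl /=.
under [RHS]eq_bigr => m _ do rewrite /Pmat summxE big_distrl /=.
rewrite exchange_big /=; apply: eq_bigr => k _; apply: eq_bigr => m _.
by rewrite [in RHS]mxE [in LHS]mxE (Mk_sym m l k); ring.
Qed.

Lemma PmatD (a b : 'cV[R]_K.+1) : P (a + b) = P a + P b.
Proof.
by rewrite /Pmat -big_split; apply: eq_bigr => k _; rewrite mxE scalerDl.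
Qed.

Lemma PmatZ (c : R) (a : 'cV[R]_K.+1) : P (c *: a) = c *: P a.
Proof.
by rewrite /Pmat scaler_sumr; apply: eq_bigr => k _; rewrite mxE scalerA.
Qed.

Lemma Pmat_avg_mul_jump (a b : 'cV[R]_K.+1) :
  P (avg a b) *m (b - a) = 2^-1 *: (P b *m b - P a *m a).
Proof.
rewrite /avg PmatZ PmatD -scalemxAl mulmxDl !mulmxBr (Pmat_mulmxC a b).
by rewrite addrC addrA subrK.
Qed.

Lemma vel0 (a : 'cV[R]_K.+1) : vel rho phi a 0 = 0.
Proof. by rewrite /vel mulmx0. Qed.

Lemma avg00 : avg (0 : 'cV[R]_K.+1) 0 = 0.
Proof. by rewrite /avg addr0 scaler0. Qed.

Variable g : R.
Implicit Types (hL hR : 'cV[R]_K.+1).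

Definition pressure hL hR : 'cV[R]_K.+1 := (2^-1 * g) *: avg (P hL *m hL) (P hR *m hR).

Lemma FEC_h_rest hL hR : FEC_h rho phi hL 0 0 hR 0 0 = 0.
Proof. by rewrite /FEC_h !vel0 avg00 mulmx0. Qed.

Lemma GEC_h_rest hL hR : GEC_h rho phi hL 0 0 hR 0 0 = 0.
Proof. by rewrite /GEC_h !vel0 avg00 mulmx0. Qed.

Lemma FEC_qx_rest hL hR : FEC_qx rho phi g hL 0 0 hR 0 0 = pressure hL hR.
Proof. by rewrite /FEC_qx !vel0 avg00 mulmx0 addr0. Qed.

Lemma FEC_qy_rest hL hR : FEC_qy rho phi hL 0 0 hR 0 0 = 0.
Proof. by rewrite /FEC_qy !vel0 avg00 mulmx0. Qed.

Lemma GEC_qx_rest hL hR : GEC_qx rho phi hL 0 0 hR 0 0 = 0.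
Proof. by rewrite /GEC_qx !vel0 avg00 mulmx0. Qed.

Lemma GEC_qy_rest hL hR : GEC_qy rho phi g hL 0 0 hR 0 0 = pressure hL hR.
Proof. by rewrite /GEC_qy !vel0 avg00 mulmx0 addr0. Qed.

Lemma pressure_jump_balances_source (d : R) (hs Bs : int -> 'cV[R]_K.+1)
    (C : 'cV[R]_K.+1) (n : int) :
  (forall m, hs m + Bs m = C) ->
  d^-1 *: (pressure (hs n) (hs (n + 1)) - pressure (hs (n - 1)) (hs n)) =
  - (g / (2 * d)) *:
     (P (avg (hs n) (hs (n + 1))) *m (Bs (n + 1) - Bs n)
      + P (avg (hs (n - 1)) (hs n)) *m (Bs n - Bs (n - 1))).
Proof.
move=> flat.
have jumpB m m' : Bs m' - Bs m = - (hs m' - hs m).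
  have Bs_eq m'' : Bs m'' = C - hs m'' by rewrite -(flat m'') addrC addKr.
  by rewrite !Bs_eq; apply/matrixP => ? ?; rewrite !mxE; ring.
rewrite !jumpB !mulmxN !Pmat_avg_mul_jump /pressure /avg invfM.
move: (P (hs n) *m hs n) (P (hs (n + 1)) *m hs (n + 1)) (P (hs (n - 1)) *m hs (n - 1)).
by move=> X Y Z; apply/matrixP => ? ?; rewrite !mxE; ring.
Qed.

End GalerkinProduct.

Section LakeAtRest.
Set Implicit Arguments. Unset Strict Implicit.
Variables (R : realType) (K : nat) (rho : R -> R) (phi : 'I_K.+1 -> {poly R}).
Variables (g dx dy : R) (h qx qy B : int -> int -> 'cV[R]_K.+1) (C : 'cV[R]_K.+1).
Hypotheses (qx0 : forall i j, qx i j = 0) (qy0 : forall i j, qy i j = 0).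
Hypothesis flat : forall i j, h i j + B i j = C.

Lemma rhs_h_rest i j : rhs_h rho phi dx dy h qx qy i j = 0.
Proof.
rewrite /rhs_h /Fx /Gy !qx0 !qy0 !FEC_h_rest !GEC_h_rest.
by rewrite !subrr !scaler0 oppr0 addr0.
Qed.

Lemma rhs_qx_rest i j : rhs_qx rho phi g dx dy h qx qy B i j = 0.
Proof.
rewrite /rhs_qx /Fx /Gy (subrK 1 i) !qx0 !qy0 !FEC_qx_rest !GEC_qx_rest.
rewrite subrr scaler0 oppr0 addr0.
by rewrite /S_qx -(pressure_jump_balances_source rho phi g dx i (flat^~ j)) addNr.
Qed.

Lemma rhs_qy_rest i j : rhs_qy rho phi g dx dy h qx qy B i j = 0.
Proof.
rewrite /rhs_qy /Fx /Gy (subrK 1 j) !qx0 !qy0 !FEC_qy_rest !GEC_qy_rest.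
rewrite subrr scaler0 oppr0 add0r.
by rewrite /S_qy -(pressure_jump_balances_source rho phi g dy j (flat i)) addNr.
Qed.

End LakeAtRest.

Theorem lemma4p3 (R : realType) (K : nat) (rho : R -> R)
  (phi : 'I_K.+1 -> {poly R}) (g dx dy : R)
  (h qx qy : R -> int -> int -> 'cV[R]_K.+1) (B : int -> int -> 'cV[R]_K.+1)
  (C : 'cV[R]_K.+1) (t0 : R) :
  (* rho is a probability density on R *)
  measurable_fun setT rho ->
  (forall x, 0 <= rho x) ->
  (\int[@lebesgue_measure R]_x (rho x)%:E = 1)%E ->
  (* phi_1 == 1 and the phi_k are orthonormal w.r.t. rho *)
  phi ord0 = 1 ->
  (forall k l : 'I_K.+1,
     (\int[@lebesgue_measure R]_x ((phi k).[x] * (phi l).[x] * rho x)%:E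
       = ((k == l)%:R)%:E)%E) ->
  (* the integrals defining the M_k exist *)
  (forall k l m : 'I_K.+1,
     (@lebesgue_measure R).-integrable setT
       (fun x => ((phi k).[x] * (phi l).[x] * (phi m).[x] * rho x)%:E)) ->
  0 < g -> 0 < dx -> 0 < dy ->
  (* P(h_{i,j}) positive definite *)
  (forall t i j, posdef (Pmat rho phi (h t i j))) ->
  (* the semi-discrete scheme (bottom B independent of time) *)
  (forall t i j (k : 'I_K.+1),
     is_derive t (1 : R) (fun s => h s i j k ord0)
       (rhs_h rho phi dx dy (h t) (qx t) (qy t) i j k ord0)) ->
  (forall t i j (k : 'I_K.+1),
     is_derive t (1 : R) (fun s => qx s i j k ord0)
       (rhs_qx rho phi g dx dy (h t) (qx t) (qy t) B i j k ord0)) ->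
  (forall t i j (k : 'I_K.+1),
     is_derive t (1 : R) (fun s => qy s i j k ord0)
       (rhs_qy rho phi g dx dy (h t) (qx t) (qy t) B i j k ord0)) ->
  (* lake at rest at time t0 *)
  (forall i j, qx t0 i j = 0 /\ qy t0 i j = 0 /\ h t0 i j + B i j = C) ->
  forall i j (k : 'I_K.+1),
    derive1 (fun s => h s i j k ord0) t0 = 0 /\
    derive1 (fun s => qx s i j k ord0) t0 = 0 /\
    derive1 (fun s => qy s i j k ord0) t0 = 0.
Proof.
move=> _ _ _ _ _ _ _ _ _ _ Dh Dqx Dqy rest i j k.
have qx0 i' j' : qx t0 i' j' = 0 by case: (rest i' j').
have qy0 i' j' : qy t0 i' j' = 0 by case: (rest i' j') => _ [].
have flat i' j' : h t0 i' j' + B i' j' = C by case: (rest i' j') => _ [].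
rewrite !derive1E !derive_val.
rewrite (rhs_h_rest rho phi dx dy (h t0) qx0 qy0) (rhs_qx_rest rho phi g dx dy qx0 qy0 flat).
by rewrite (rhs_qy_rest rho phi g dx dy qx0 qy0 flat) !mxE; split; [|split].
Qed.
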